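(* (a) Let $n\geq 3$ and let $H_1\neq H_2$ be $1$-dimensional linear subspaces of $\mathbb{R}^n$. Then: $H_1^\perp+H_2^\perp=\mathbb{R}^n$ and $\{H_1^\perp,H_2^\perp\}$ cannot be partitioned into two nonempty mutually orthogonal subsets; if $E\subset S^{n-1}$ is nonempty, closed, and $S^{n-1}\cap(H_j^\perp+x)\subset E$ for $j=1,2$ and all $x\in E$, then $E=S^{n-1}$; every closed $F\subset\mathbb{R}^n$ invariant under all rotations fixing $H_1$ and all rotations fixing $H_2$ is a union of spheres centered at the origin; and every convex body rotationally symmetric with respect to both $H_1$ and $H_2$ is a ball centered at the origin. (b) Let $n\ge 4$. For every $k\in\mathbb{N}$ there exist pairwise different linear subspaces $H_1,\dots,H_k$ of $\mathbb{R}^n$ with $2\le\dim H_j\le n-2$ and a convex body $K$ in $\mathbb{R}^n$ that is rotationally symmetric with respect to each $H_j$ but is not a ball centered at the origin (so that none of the conclusions in (a), with $H_1,H_2$ replaced by $H_1,\dots,H_k$, hold for them).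
   Context: $H^\perp$ is the orthogonal complement; $S^{n-1}$ the unit sphere. A rotation fixing $H$ is an element of $SO(n)$ acting as the identity on $H$. A set $X$ is rotationally symmetric with respect to an $i$-dimensional subspace $H$ if for every $x\in H$, $X\cap(H^\perp+x)$ is a union of $(n-i-1)$-dimensional spheres centered at $x$. A convex body is a compact convex set with nonempty interior. *)

(* MathComp + MathComp-Analysis, R : realType,
   points of R^n are row vectors 'rV[R]_n, linear subspaces are represented
   by matrices (their row spaces, mxalgebra). *)
From HB Require Import structures.
From mathcomp Require Import all_boot all_order all_algebra.
From mathcomp Require Import all_classical all_reals all_analysis.
Set Implicit Arguments. Unset Strict Implicit. Unset Printing Implicit Defensive.
Import Order.TTheory GRing.Theory Num.Theory.
Local Open Scope ring_scope.
Import numFieldNormedType.Exports.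
Local Open Scope classical_set_scope.

Section Defs.
Variables (R : realType) (n : nat).
Implicit Types (x y z u v : 'rV[R]_n) (H U V Q : 'M[R]_n) (X : set 'rV[R]_n).

Definition dotv u v : R := (u *m v^T) 0 0.
Definition enorm x : R := Num.sqrt (dotv x x).

Definition perp H : 'M[R]_n := kermx H^T.

Definition sphere : set 'rV[R]_n := [set x | enorm x = 1].

Definition orth_sub U V : Prop :=
  forall u v, (u <= U)%MS -> (v <= V)%MS -> dotv u v = 0.

(* Q in SO(n) (acting on row vectors by x |-> x *m Q) *)
Definition rotation Q : Prop := Q *m Q^T = 1%:M /\ \det Q = 1.

Definition rotation_fixing H Q : Prop :=
  rotation Q /\ forall x, (x <= H)%MS -> x *m Q = x.

Definition union_of_origin_spheres X : Prop :=
  forall y z, enorm y = enorm z -> X y -> X z.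

(* X is rotationally symmetric w.r.t. H: for every x in H,
   X /\ (H^perp + x) is a union of spheres (in x + H^perp) centered at x *)
Definition rot_symmetric X H : Prop :=
  forall x, (x <= H)%MS -> forall y z,
    (y - x <= perp H)%MS -> (z - x <= perp H)%MS ->
    enorm (y - x) = enorm (z - x) -> X y -> X z.

Definition convex_set X : Prop :=
  forall x y (t : R), X x -> X y -> 0 <= t <= 1 -> X (t *: x + (1 - t) *: y).

Definition convex_body X : Prop :=
  compact X /\ convex_set X /\ (X°) !=set0.

Definition origin_ball X : Prop :=
  exists r : R, 0 < r /\ X = [set x | enorm x <= r].

End Defs.

From Pilot Require Import Defs.
From HB Require Import structures.
From mathcomp Require Import all_boot all_order all_algebra.
From mathcomp Require Import all_classical all_reals all_analysis.
From mathcomp Require Import ring lra zify.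
Import Order.TTheory GRing.Theory Num.Theory.
Local Open Scope ring_scope.
Import numFieldNormedType.Exports.
Local Open Scope classical_set_scope.

(* (a) Write H1, H2 as the spans of unit vectors a, b; then c = <a, b> satisfies
   c^2 < 1.  Each hypothesis on E, F or K makes the set closed under "slice moves":
   x may be replaced by any y with |y| = |x| and <y, a> = <x, a> (or the same with
   b).  As n >= 3, an a-move followed by a b-move can raise <x, a> by up to
   (1 - c^2)(r - <x, a>) and lower it by up to (1 - c^2)(r + <x, a>) on the sphere
   of radius r, so finitely many moves connect any two points of a sphere centred
   at the origin, and the set is a union of such spheres.  A nonempty subset of S^{n-1} is then all of it, and a convex body is
   then a ball.  For F the moves are rotations fixing the line, each a product of
   two hyperplane reflections.
   (b) The unit ball centred at e_1 is rotationally symmetric with respect to every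
   subspace containing e_1, in particular to the distinct planes
   span(e_1, e_2 + j e_3). *)

Section Dot.
Context {R : realType} {n : nat}.
Implicit Types (u v w x : 'rV[R]_n).

Lemma dotvE u v : dotv u v = \sum_i u 0 i * v 0 i.
Proof. by rewrite /dotv mxE; apply: eq_bigr => i _; rewrite mxE. Qed.

Lemma dotvC u v : dotv u v = dotv v u.
Proof. by rewrite !dotvE; apply: eq_bigr => i _; rewrite mulrC. Qed.

Lemma dotvDl u v w : dotv (u + v) w = dotv u w + dotv v w.
Proof. by rewrite !dotvE -big_split; apply: eq_bigr => i _; rewrite mxE mulrDl. Qed.

Lemma dotvDr u v w : dotv w (u + v) = dotv w u + dotv w v.
Proof. by rewrite dotvC dotvDl !(dotvC w). Qed.

Lemma dotvZl k u v : dotv (k *: u) v = k * dotv u v.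
Proof. by rewrite !dotvE mulr_sumr; apply: eq_bigr => i _; rewrite mxE mulrA. Qed.

Lemma dotvZr k u v : dotv v (k *: u) = k * dotv v u.
Proof. by rewrite dotvC dotvZl dotvC. Qed.

Lemma dotvNl u v : dotv (- u) v = - dotv u v.
Proof. by rewrite -scaleN1r dotvZl mulN1r. Qed.

Lemma dotvNr u v : dotv v (- u) = - dotv v u.
Proof. by rewrite -scaleN1r dotvZr mulN1r. Qed.

Lemma dotvBl u v w : dotv (u - v) w = dotv u w - dotv v w.
Proof. by rewrite dotvDl dotvNl. Qed.

Lemma dotvBr u v w : dotv w (u - v) = dotv w u - dotv w v.
Proof. by rewrite dotvDr dotvNr. Qed.

Lemma dotv0l u : dotv 0 u = 0.
Proof. by rewrite -(scale0r 0) dotvZl mul0r. Qed.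

Lemma dotv_pythagoras u v : dotv u v = 0 ->
  dotv (u + v) (u + v) = dotv u u + dotv v v.
Proof. by move=> uv; rewrite !(dotvDl, dotvDr) (dotvC v u) uv addr0 add0r. Qed.

Lemma coord_sqr_le_dotv u i : u 0 i ^+ 2 <= dotv u u.
Proof.
rewrite dotvE (bigD1 i) //= -expr2 lerDl.
by apply: sumr_ge0 => j _; rewrite -expr2 sqr_ge0.
Qed.

Lemma dotv_ge0 u : 0 <= dotv u u.
Proof. by rewrite dotvE; apply: sumr_ge0 => i _; rewrite -expr2 sqr_ge0. Qed.

Lemma dotv_eq0 u : dotv u u = 0 -> u = 0.
Proof.
move=> u0; apply/rowP => i; rewrite mxE; apply/eqP; rewrite -sqrf_eq0 eq_le sqr_ge0 andbT.
by rewrite -u0 coord_sqr_le_dotv.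
Qed.

Lemma dotv_gt0 u : u != 0 -> 0 < dotv u u.
Proof. by move=> u0; rewrite lt_def dotv_ge0 andbT; apply: contra u0 => /eqP/dotv_eq0->. Qed.

Lemma mulmx_tr_dotv u v : u *m v^T = (dotv u v)%:M.
Proof. exact: mx11_scalar. Qed.

Lemma enorm_eq_dotv u v : enorm u = enorm v <-> dotv u u = dotv v v.
Proof.
rewrite /enorm; split=> [/eqP|-> //].
by rewrite eqr_sqrt ?dotv_ge0 // => /eqP.
Qed.

Lemma enorm_sqr u : enorm u ^+ 2 = dotv u u.
Proof. by rewrite /enorm sqr_sqrtr // dotv_ge0. Qed.

Lemma enorm_ge0 u : 0 <= enorm u.
Proof. exact: sqrtr_ge0. Qed.

Lemma enorm_le u r : 0 <= r -> (enorm u <= r) = (dotv u u <= r ^+ 2).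
Proof. by move=> r0; rewrite -enorm_sqr lter_pXn2r // ?nnegrE ?enorm_ge0. Qed.

Lemma dotv_unit_scale u : u != 0 ->
  dotv ((enorm u)^-1 *: u) ((enorm u)^-1 *: u) = 1.
Proof.
move=> u0; have e0 : 0 < enorm u by rewrite sqrtr_gt0 dotv_gt0.
by rewrite dotvZl dotvZr -enorm_sqr; field; rewrite gt_eqF.
Qed.

Lemma cauchy_schwarz_unit a x : dotv a a = 1 -> dotv x a ^+ 2 <= dotv x x.
Proof.
move=> a1; have := dotv_ge0 (x - dotv x a *: a).
rewrite !(dotvBl, dotvBr, dotvZl, dotvZr) a1 (dotvC a x); lra.
Qed.

End Dot.

Section Lines.
Context {R : realType} {n : nat}.
Implicit Types (u v a b : 'rV[R]_n) (H : 'M[R]_n).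

Lemma perpP H u : (u <= perp H)%MS = (u *m H^T == 0).
Proof. by rewrite /perp sub_kermx. Qed.

Lemma dotv_perp {H u v} : (u <= perp H)%MS -> (v <= H)%MS -> dotv v u = 0.
Proof.
rewrite perpP => /eqP uH /submxP [w ->].
by rewrite /dotv -mulmxA -[H *m _]trmxK trmx_mul trmxK uH trmx0 mulmx0 mxE.
Qed.

Lemma perp_lineP {H a} u : (H == a)%MS -> (u <= perp H)%MS <-> dotv u a = 0.
Proof.
move=> /eqmxP Ha; split=> [uH | ua]; first by rewrite dotvC (dotv_perp uH) // Ha.
have /submxP [W ->] : (H <= a)%MS by rewrite Ha.
by rewrite perpP trmx_mul mulmxA mulmx_tr_dotv ua raddf0 mul0mx.
Qed.

Lemma nonzero_row m (A : 'M[R]_(m, n)) : A != 0 -> exists i, row i A != 0.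
Proof.
move=> A0; apply/existsP; apply: contraNT A0; rewrite negb_exists => /forallP A0.
by apply/eqP/row_matrixP => i; rewrite row0; apply/eqP/negPn.
Qed.

Lemma unit_line_of_rank1 H : \rank H = 1%N -> exists2 a, dotv a a = 1 & (H == a)%MS.
Proof.
move=> rH; have [i Hi0] : exists i, row i H != 0.
  by apply: nonzero_row; rewrite -mxrank_eq0 rH.
have HiH : (row i H == H)%MS.
  have /leqifP := mxrank_leqif_sup (row_sub i H).
  by rewrite rank_rV Hi0 rH row_sub; case: ifP.
have e0 : (enorm (row i H))^-1 != 0 by rewrite invr_eq0 gt_eqF // sqrtr_gt0 dotv_gt0.
exists ((enorm (row i H))^-1 *: row i H); first exact: dotv_unit_scale.
by apply/eqmxP/eqmx_sym/(eqmx_trans (eqmx_scale _ e0)); apply/eqmxP.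
Qed.

Lemma exists_ortho2 a b : (3 <= n)%N ->
  exists2 q, q != 0 & dotv q a = 0 /\ dotv q b = 0.
Proof.
move=> n3; set M : 'M[R]_(n, 1 + 1) := row_mx a^T b^T.
have [i qi] : exists i, row i (kermx M) != 0.
  apply: nonzero_row; rewrite -mxrank_eq0 mxrank_ker -lt0n.
  by have := rank_leq_col M; lia.
exists (row i (kermx M)) => //.
have /eqP := row_sub i (kermx M); rewrite sub_kermx /M mul_mx_row.
by move=> /eqP; rewrite row_mx_eq0 => /andP [/eqP h1 /eqP h2]; rewrite /dotv h1 h2 !mxE.
Qed.

Lemma exists_vec_dotv a b rho s t : (3 <= n)%N ->
  dotv a a = 1 -> dotv b b = 1 -> dotv a b ^+ 2 < 1 ->
  s ^+ 2 - 2 * dotv a b * s * t + t ^+ 2 <= rho * (1 - dotv a b ^+ 2) ->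
  exists z, [/\ dotv z z = rho, dotv z a = s & dotv z b = t].
Proof.
move=> n3 a1 b1; set c := dotv a b => c1 feas.
have d0 : 0 < 1 - c ^+ 2 by rewrite subr_gt0.
have [q0 q0_neq0 [q0a q0b]] := exists_ortho2 a b n3.
set q := (enorm q0)^-1 *: q0.
have q1 : dotv q q = 1 by apply: dotv_unit_scale.
have [qa qb] : dotv q a = 0 /\ dotv q b = 0 by rewrite !dotvZl q0a q0b mulr0.
(* [p] is the solution of the 2x2 Gram system in span(a, b); the rest goes along [q] *)
set p := ((s - c * t) / (1 - c ^+ 2)) *: a + ((t - c * s) / (1 - c ^+ 2)) *: b.
have pa : dotv p a = s.
  by rewrite /p !(dotvDl, dotvZl) a1 (dotvC b a) -/c; field; rewrite gt_eqF.
have pb : dotv p b = t.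
  by rewrite /p !(dotvDl, dotvZl) b1 -/c; field; rewrite gt_eqF.
have pq : dotv p q = 0 by rewrite /p !(dotvDl, dotvZl) !(dotvC _ q) qa qb !mulr0 addr0.
have pp : dotv p p * (1 - c ^+ 2) = s ^+ 2 - 2 * c * s * t + t ^+ 2.
  rewrite {1}/p dotvDl !dotvZl !(dotvC _ p) pa pb.
  by field; rewrite gt_eqF.
have k2 : Num.sqrt (rho - dotv p p) ^+ 2 = rho - dotv p p.
  by rewrite sqr_sqrtr // subr_ge0 -(ler_pM2r d0) pp.
clearbody p q; exists (p + Num.sqrt (rho - dotv p p) *: q); split.
- rewrite dotv_pythagoras; last by rewrite dotvZr pq mulr0.
  by rewrite dotvZl dotvZr q1 mulr1 -expr2 k2 addrC subrK.
- by rewrite dotvDl dotvZl qa mulr0 addr0.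
- by rewrite dotvDl dotvZl qb mulr0 addr0.
Qed.

End Lines.

Section Slices.
Context {R : realType} {n : nat}.
Implicit Types (a : 'rV[R]_n) (X : set 'rV[R]_n).

Definition slice_closed X a :=
  forall x y, X x -> dotv y y = dotv x x -> dotv y a = dotv x a -> X y.

Definition reaches X a (r s : R) :=
  exists2 x, X x & dotv x x = r ^+ 2 /\ dotv x a = s.

Lemma slice_closedN {X a} : slice_closed X a -> slice_closed X (- a).
Proof. by move=> Xa x y Xx yx; rewrite !dotvNr => /oppr_inj; apply: Xa. Qed.

Lemma reachesN {X a r s} : reaches X a r s -> reaches X (- a) r (- s).
Proof. by case=> x Xx [xx xa]; exists x; rewrite ?dotvNr ?xa. Qed.

End Slices.

Section SliceMoves.
Context {R : realType} {n : nat}.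
Context {X : set 'rV[R]_n} {a b : 'rV[R]_n}.
Hypotheses (n3 : (3 <= n)%N) (a1 : dotv a a = 1) (b1 : dotv b b = 1)
  (ab1 : dotv a b ^+ 2 < 1) (Xa : slice_closed X a) (Xb : slice_closed X b).

Lemma reaches_bound {r s} : reaches X a r s -> 0 <= r -> - r <= s <= r.
Proof.
case=> x _ [xx <-] r0; rewrite -ler_norml -(ler_pXn2r (isT : (0 < 2)%N)) ?nnegrE //.
by rewrite real_normK ?num_real // -xx cauchy_schwarz_unit.
Qed.

(* An a-move to a point [y] with [<y, b> = c s] followed by a b-move. *)
Lemma reaches_step r s s' : 0 <= r -> reaches X a r s ->
  s - (1 - dotv a b ^+ 2) * (r + s) <= s' <= s + (1 - dotv a b ^+ 2) * (r - s) ->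
  reaches X a r s'.
Proof.
move=> r0 Xs; have /andP[sr rs] := reaches_bound Xs r0.
case: Xs => x Xx [xx xa]; have c1 := ab1; set c := dotv a b in c1 *; set d := 1 - c ^+ 2.
move=> /andP [lo hi]; have d0 : 0 < d by rewrite subr_gt0.
have [y [yy ya yb]] : exists y, [/\ dotv y y = r ^+ 2, dotv y a = s & dotv y b = c * s].
  apply: exists_vec_dotv => //; rewrite -/c.
  have : 0 <= d * (r ^+ 2 - s ^+ 2) by apply: mulr_ge0; nra.
  rewrite /d; nra.
have Xy : X y by apply: (Xa x); rewrite ?yy ?xx ?ya ?xa.
have [z [zz za zb]] : exists z, [/\ dotv z z = r ^+ 2, dotv z a = s' & dotv z b = c * s].
  apply: exists_vec_dotv => //; rewrite -/c.
  have e1 : 0 <= d * r - (s' - c ^+ 2 * s) by move: lo hi; rewrite /d; nra.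
  have e2 : 0 <= d * r + (s' - c ^+ 2 * s) by move: lo hi; rewrite /d; nra.
  have e3 : 0 <= d * c ^+ 2 * (r ^+ 2 - s ^+ 2).
    by apply: mulr_ge0; [apply: mulr_ge0; [lra | apply: sqr_ge0] | nra].
  move: (mulr_ge0 e1 e2) e3; rewrite /d; nra.
by exists z => //; apply: (Xb y); rewrite ?zz ?yy ?zb ?yb.
Qed.

Lemma reaches_up r s t : 0 <= r -> reaches X a r s -> s <= t < r -> reaches X a r t.
Proof.
move=> r0 Xs /andP [st tr]; set d := 1 - dotv a b ^+ 2.
have g0 : 0 < d * (r - t) by apply: mulr_gt0; rewrite subr_gt0.
have [N] : exists N : nat, t - s <= N%:R * (d * (r - t)).
  exists (Num.truncn ((t - s) / (d * (r - t)))).+1.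
  by rewrite -ler_pdivrMr //; apply/ltW/truncnS_gt.
elim: N s Xs st => [|N IH] s Xs st.
  by rewrite mul0r subr_le0 => ts; have -> : t = s by apply/eqP; rewrite eq_le ts st.
have /andP[sr _] := reaches_bound Xs r0.
have d0 : 0 < d by rewrite subr_gt0.
have step s' : s <= s' <= s + d * (r - t) -> reaches X a r s'.
  have h1 : 0 <= d * (r + s) by apply: mulr_ge0; lra.
  have h2 : d * (r - t) <= d * (r - s) by apply: ler_wpM2l; lra.
  move=> /andP [ss' s't]; apply: (reaches_step _ _ _ r0 Xs); rewrite -/d; apply/andP; split; lra.
have [tsg _ | gts] := lerP (t - s) (d * (r - t)); first by apply: step; lra.
rewrite -natr1 mulrDl mul1r => tsN.
by apply: (IH (s + d * (r - t))); [apply: step | |]; lra.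
Qed.

End SliceMoves.
Arguments reaches_up {R n X a b} n3 a1 b1 ab1 Xa Xb {r s t}.

Section Spheres.
Context {R : realType} {n : nat}.
Context {X : set 'rV[R]_n} {a b : 'rV[R]_n}.
Hypotheses (n3 : (3 <= n)%N) (a1 : dotv a a = 1) (b1 : dotv b b = 1)
  (ab1 : dotv a b ^+ 2 < 1) (Xa : slice_closed X a) (Xb : slice_closed X b).

Lemma reaches_interior r s t : 0 <= r -> reaches X a r s -> - r < t < r ->
  reaches X a r t.
Proof.
move=> r0 Xs /andP [rt tr]; have [st|ts] := lerP s t.
  by apply: (reaches_up n3 a1 b1 ab1 Xa Xb r0 Xs); rewrite st.
have dotvNN u v : dotv (- u) (- v) = dotv u v by rewrite dotvNl dotvNr opprK.
have /reachesN : reaches X (- a) r (- t).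
  apply: (reaches_up n3 _ _ _ (slice_closedN Xa) (slice_closedN Xb) r0 (reachesN Xs)).
  - by rewrite dotvNN.
  - by rewrite dotvNN.
  - by rewrite dotvNN.
  - by rewrite lerN2 ltW //= ltrNl.
by rewrite !opprK.
Qed.

Lemma slice_closed2_spheres : union_of_origin_spheres X.
Proof.
move=> y z /enorm_eq_dotv yz Xy; have c2 := ab1; set c := dotv a b in c2.
have [y0 | y_neq0] := eqVneq y 0.
  have z0 : z = 0 by apply: dotv_eq0; rewrite -yz y0 dotv0l.
  by rewrite z0 -y0.
set r := enorm y; have r0 : 0 < r by rewrite sqrtr_gt0 dotv_gt0.
have r2 : dotv y y = r ^+ 2 by rewrite enorm_sqr.
set t := dotv z b; have tr : t ^+ 2 <= r ^+ 2 by rewrite -r2 yz cauchy_schwarz_unit.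
(* first move [<., a>] to [c t] by a-moves, then one a-move and one b-move reach [z] *)
have [x Xx [xx xa]] : reaches X a r (c * t).
  apply: (reaches_interior _ (dotv y a) _ (ltW r0)); first by exists y.
  have : (c * t) ^+ 2 < r ^+ 2.
    rewrite exprMn; apply: (le_lt_trans (ler_wpM2l (sqr_ge0 c) tr)).
    by rewrite gtr_pMl // exprn_gt0.
  by move=> h; apply/andP; split; nra.
have [w [ww wa wb]] : exists w, [/\ dotv w w = r ^+ 2, dotv w a = c * t & dotv w b = t].
  apply: exists_vec_dotv => //; rewrite -/c.
  have : 0 <= (1 - c ^+ 2) * (r ^+ 2 - t ^+ 2) by apply: mulr_ge0; lra.
  nra.
have Xw : X w by apply: (Xa x); rewrite ?ww ?xx ?wa ?xa.
by apply: (Xb w); rewrite ?ww -?r2.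
Qed.

End Spheres.

Lemma det1Dmulmx {R : comPzRingType} m (U : 'M[R]_(m, 1)) (V : 'M[R]_(1, m)) :
  \det (1%:M + U *m V) = 1 + (V *m U) 0 0.
Proof.
(* both sides are the determinant of [[1, -V], [U, 1]], factored in two ways *)
have e1 : (block_mx 1%:M (- V) U 1%:M : 'M[R]_(1 + m)) =
    block_mx 1%:M 0 U 1%:M *m block_mx 1%:M (- V) 0 (1%:M + U *m V).
  rewrite mulmx_block !(mul1mx, mulmx1, mul0mx, mulmx0, addr0, add0r).
  by rewrite mulmxN addrCA addNr addr0.
have e2 : (block_mx 1%:M (- V) U 1%:M : 'M[R]_(1 + m)) =
    block_mx (1%:M + V *m U) (- V) 0 1%:M *m block_mx 1%:M 0 U 1%:M.
  rewrite mulmx_block !(mul1mx, mulmx1, mul0mx, mulmx0, addr0, add0r).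
  by rewrite mulNmx addrK.
have := congr1 determinant e2; rewrite {1}e1 !det_mulmx !det_lblock !det_ublock.
by rewrite !det1 !mul1r !mulr1 => ->; rewrite det_mx11 !mxE.
Qed.

Section Reflections.
Context {R : realType} {n : nat}.
Implicit Types (u x y a : 'rV[R]_n).

Definition reflmx u : 'M[R]_n := 1%:M - (2 / dotv u u) *: (u^T *m u).

Lemma reflmxE x u : x *m reflmx u = x - (2 / dotv u u * dotv x u) *: u.
Proof.
by rewrite mulmxBr mulmx1 -scalemxAr mulmxA mulmx_tr_dotv mul_scalar_mx scalerA.
Qed.

Lemma tr_reflmx u : (reflmx u)^T = reflmx u.
Proof. by rewrite /reflmx linearB /= trmx1 linearZ /= trmx_mul trmxK. Qed.

Lemma reflmxK u : u != 0 -> reflmx u *m reflmx u = 1%:M.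
Proof.
move=> u0; have d0 := dotv_gt0 _ u0.
apply/eqP/mulmxP => x; rewrite mulmxA !reflmxE mulmx1.
rewrite !(dotvBl, dotvZl) -addrA -opprD -scalerDl.
suff -> : 2 / dotv u u * dotv x u + 2 / dotv u u * (dotv x u - 2 / dotv u u * dotv x u * dotv u u) = 0.
  by rewrite scale0r subr0.
by field; rewrite gt_eqF.
Qed.

Lemma det_reflmx u : u != 0 -> \det (reflmx u) = -1.
Proof.
move=> u0; have d0 := dotv_gt0 _ u0.
rewrite /reflmx -scaleNr scalemxAl det1Dmulmx -scalemxAr mxE mulmx_tr_dotv mxE /= mulr1n.
by field; rewrite gt_eqF.
Qed.

Lemma reflmx_fix u x : dotv x u = 0 -> x *m reflmx u = x.
Proof. by move=> h; rewrite reflmxE h mulr0 scale0r subr0. Qed.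

Lemma rotation_reflmx2 u v : u != 0 -> v != 0 -> rotation (reflmx u *m reflmx v).
Proof.
move=> u0 v0; split; last by rewrite det_mulmx !det_reflmx // mulrNN mulr1.
by rewrite trmx_mul !tr_reflmx mulmxA -(mulmxA (reflmx u)) reflmxK // mulmx1 reflmxK.
Qed.

(* the reflection in x - y swaps x and y; a second reflection restores the orientation *)
Lemma rotation_exists {a x y} : (3 <= n)%N ->
  dotv x x = dotv y y -> dotv x a = dotv y a ->
  exists Q, [/\ rotation Q, a *m Q = a & x *m Q = y].
Proof.
move=> n3 xy xa; have [w w0 [wa wy]] := exists_ortho2 a y n3.
have [<- | xny] := eqVneq x y.
  exists (reflmx w *m reflmx w).
  by split; [exact: rotation_reflmx2 | rewrite reflmxK // mulmx1 ..].
have u0 : x - y != 0 by rewrite subr_eq0.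
have xyu : dotv (x - y) (x - y) = 2 * dotv x (x - y).
  by rewrite !(dotvBl, dotvBr) -xy (dotvC y x); ring.
have xR : x *m reflmx (x - y) = y.
  have d0 : dotv x (x - y) != 0.
    by apply: contraTneq (dotv_gt0 _ u0); rewrite xyu => ->; rewrite mulr0 ltxx.
  have k1 : 2 / dotv (x - y) (x - y) * dotv x (x - y) = 1 by rewrite xyu; field.
  by rewrite reflmxE k1 scale1r opprB addrC subrK.
exists (reflmx (x - y) *m reflmx w); split; first exact: rotation_reflmx2.
- have au : dotv a (x - y) = 0 by rewrite dotvBr (dotvC a x) (dotvC a y) xa subrr.
  by rewrite mulmxA (reflmx_fix _ _ au) reflmx_fix // dotvC.
- by rewrite mulmxA xR reflmx_fix // dotvC.
Qed.

End Reflections.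

Section LineSymmetries.
Context {R : realType} {n : nat}.
Context {H : 'M[R]_n} {a : 'rV[R]_n}.
Hypotheses (a1 : dotv a a = 1) (Ha : (H == a)%MS).

Lemma slice_closed_sphere_moves E : E `<=` @sphere R n ->
  (forall x, E x -> @sphere R n `&` [set y | (y - x <= perp H)%MS] `<=` E) ->
  slice_closed E a.
Proof.
move=> ES hE x y Ex yx ya; apply: (hE x Ex); split=> /=.
- by rewrite /sphere /= -(ES x Ex); apply/enorm_eq_dotv.
- by apply/(perp_lineP _ Ha); rewrite dotvBl ya subrr.
Qed.

Lemma slice_closed_rotation_invariant F : (3 <= n)%N ->
  (forall Q, rotation_fixing H Q -> forall x, F x -> F (x *m Q)) ->
  slice_closed F a.
Proof.
move=> n3 hF x y Fx yx ya; have [Q [rQ aQ xQ]] := rotation_exists n3 (esym yx) (esym ya).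
rewrite -xQ; apply: hF => //; split => // v.
by rewrite (eqmxP Ha) => /sub_rVP [k ->]; rewrite -scalemxAl aQ.
Qed.

Lemma slice_closed_rot_symmetric K : rot_symmetric K H -> slice_closed K a.
Proof.
move=> sK x y Kx yx ya; set s := dotv x a.
have perp_a u : dotv u a = s -> (u - s *: a <= perp H)%MS.
  by move=> us; apply/(perp_lineP _ Ha); rewrite dotvBl dotvZl a1 mulr1 us subrr.
apply: (sK (s *: a) _ x y) => //; rewrite ?perp_a //.
- by rewrite (eqmxP Ha) scalemx_sub.
- apply/enorm_eq_dotv; rewrite !(dotvBl, dotvBr, dotvZl, dotvZr) yx ya.
  by rewrite (dotvC a x) (dotvC a y) ya.
Qed.

End LineSymmetries.

Section TwoLines.
Context {R : realType} {n : nat}.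
Context {H1 H2 : 'M[R]_n} {a b : 'rV[R]_n}.
Hypotheses (a1 : dotv a a = 1) (b1 : dotv b b = 1)
  (H1a : (H1 == a)%MS) (H2b : (H2 == b)%MS).

Lemma unit_lines_dotv_lt1 : ~~ (H1 == H2)%MS -> dotv a b ^+ 2 < 1.
Proof.
move=> H12; set c := dotv a b.
have c1 : c ^+ 2 <= 1 by rewrite -b1 /c dotvC cauchy_schwarz_unit.
rewrite lt_neqAle c1 andbT; apply: contra H12 => /eqP c2.
have c0 : c != 0 by apply: contra_eq_neq c2 => ->; rewrite expr0n eq_sym oner_eq0.
have bca : b = c *: a.
  apply/subr0_eq/dotv_eq0.
  by rewrite !(dotvBl, dotvBr, dotvZl, dotvZr) a1 b1 (dotvC b a) -/c mulr1 -expr2 c2; ring.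
apply/eqmxP/(eqmx_trans (eqmxP H1a))/(eqmx_trans (eqmx_sym (eqmx_scale a c0))).
by rewrite -bca; apply/eqmx_sym/eqmxP.
Qed.

Lemma addsmx_perp_lines : dotv a b ^+ 2 < 1 -> (perp H1 + perp H2 == 1%:M)%MS.
Proof.
set c := dotv a b => c1; have d0 : 0 < 1 - c ^+ 2 by rewrite subr_gt0.
rewrite submx1 /=; apply/rV_subP => x _.
(* x = (x - p) + p, with p along the component of a orthogonal to b *)
set p := (dotv x a / (1 - c ^+ 2)) *: (a - c *: b).
rewrite -(subrK p x) addmx_sub_adds //.
- apply/(perp_lineP _ H1a); rewrite /p !(dotvBl, dotvZl) a1 (dotvC b a) -/c.
  by field; rewrite gt_eqF.
- by apply/(perp_lineP _ H2b); rewrite /p !(dotvBl, dotvZl) b1 -/c mulr1 subrr mulr0.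
Qed.

Lemma perp_lines_not_orth : (3 <= n)%N -> ~ orth_sub (perp H1) (perp H2).
Proof.
move=> n3 orth; have [q q0 [qa qb]] := exists_ortho2 a b n3.
have /dotv_eq0 q_0 := orth q q (proj2 (perp_lineP _ H1a) qa) (proj2 (perp_lineP _ H2b) qb).
by rewrite q_0 eqxx in q0.
Qed.

End TwoLines.

Lemma sphere_of_spheres {R : realType} {n : nat} (E : set 'rV[R]_n) :
  E !=set0 -> E `<=` @sphere R n -> union_of_origin_spheres E -> E = @sphere R n.
Proof.
move=> [x Ex] ES sE; apply/seteqP; split=> // z Sz.
by apply: (sE x) => //; rewrite (ES x Ex) Sz.
Qed.

Section OriginBall.
Context {R : realType} {n : nat}.
Context {K : set 'rV[R]_n} {a : 'rV[R]_n}.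
Hypotheses (a1 : dotv a a = 1) (cK : convex_body K) (sK : union_of_origin_spheres K).

Let T := [set t : R | K (t *: a)].

Let a_neq0 : a != 0.
Proof. by apply: contra_eq_neq a1 => ->; rewrite dotv0l eq_sym oner_neq0. Qed.

Lemma enorm_scale_unit t : enorm (t *: a) = `|t|.
Proof. by rewrite /enorm dotvZl dotvZr a1 mulr1 -expr2 sqrtr_sqr. Qed.

Lemma spheres_memE x : K x <-> T (enorm x).
Proof.
have ex : enorm (enorm x *: a) = enorm x by rewrite enorm_scale_unit ger0_norm ?enorm_ge0.
by split; apply: sK; rewrite ex.
Qed.

Lemma spheres_has0 : K 0.
Proof.
case: cK => _ [cvK [x /interior_subset Kx]].
have Kxn : K (- x) by apply: (sK x) Kx; apply/enorm_eq_dotv; rewrite dotvNl dotvNr opprK.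
have := cvK _ _ (1 / 2) Kx Kxn; rewrite scalerN -scaleNr -scalerDl.
have -> : 1 / 2 + - (1 - 1 / 2) = 0 :> R by field.
by rewrite scale0r; apply; apply/andP; split; lra.
Qed.

Lemma spheres_sup_max : T (sup T) /\ ubound T (sup T).
Proof.
case: cK => cpK _.
have T0 : T 0 by rewrite /T /= scale0r; exact: spheres_has0.
have clT : closed T.
  apply: (preimage_closed (f := fun t : R => t *: a)) => [t _|]; first exact: scalel_continuous.
  exact: compact_closed.
have [M [_ MK]] := compact_bounded cpK.
have na : 0 < `|a| by rewrite normr_gt0.
have ubT : ubound T ((M + 1) / `|a|).
  move=> t Tt; rewrite ler_pdivlMr //; apply: (le_trans (ler_norm _)).
  by rewrite normrM normr_id -normrZ (MK (M + 1)) // ltrDl.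
have hsT : has_sup T by split; [exists 0 | exists ((M + 1) / `|a|)].
split; last by move=> t; apply: sup_upper_bound.
apply: (itv_closed_supremums (ex_intro _ 0 T0) clT); split.
- exact: sup_upper_bound.
- by move=> y; apply: ge_sup (ex_intro _ 0 T0).
Qed.

Lemma spheres_sup_gt0 : 0 < sup T.
Proof.
case: cK => _ [_ [x Ix]]; have [_ ubT] := spheres_sup_max.
rewrite ltNge; apply/negP => r_le0.
have K_0 y : K y -> y = 0.
  move=> /spheres_memE /ubT Ty; apply: dotv_eq0; rewrite -enorm_sqr.
  suff -> : enorm y = 0 by rewrite expr0n.
  by apply/eqP; rewrite eq_le enorm_ge0 andbT (le_trans Ty).
have na : 0 < `|a| by rewrite normr_gt0.
have [e /= e0 xe] := (nbhs_ballP _ _).1 Ix.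
have Kxa : K (x + (e / 2 / `|a|) *: a).
  apply: xe; rewrite -ball_normE /= opprD addrA subrr add0r normrN normrZ.
  by rewrite gtr0_norm ?divr_gt0 // divfK ?gt_eqF //; lra.
move: (K_0 _ Kxa); rewrite (K_0 _ (interior_subset Ix)) add0r => /eqP.
by rewrite scaler_eq0 (negPf a_neq0) orbF gt_eqF // !divr_gt0.
Qed.

Lemma origin_ball_of_spheres : origin_ball K.
Proof.
have [Tr ubT] := spheres_sup_max; have r0 := spheres_sup_gt0.
exists (sup T); split=> //; apply/seteqP; split=> x /=; first by move/spheres_memE/ubT.
move=> xr; apply/spheres_memE; case: cK => _ [cvK _].
set l := enorm x / sup T.
have l01 : 0 <= l <= 1 by rewrite /l divr_ge0 ?enorm_ge0 ?(ltW r0) //= ler_pdivrMr // mul1r.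
have := cvK _ _ l Tr spheres_has0 l01; rewrite scaler0 addr0 scalerA.
by rewrite /l divfK // gt_eqF.
Qed.

End OriginBall.

Lemma entry_le_norm {R : realType} {m n : nat} (x : 'M[R]_(m, n)) i j : `|x i j| <= `|x|.
Proof. by rewrite [leRHS]/Num.norm /= mx_normrE; apply/bigmax_geP; right; exists (i, j). Qed.

Section ShiftedBall.
Context {R : realType} {n : nat}.
Variable e : 'rV[R]_n.+1.
Hypothesis e1 : dotv e e = 1.

Definition unit_ball_at : set 'rV[R]_n.+1 := [set x | dotv (x - e) (x - e) <= 1].

Lemma unit_ball_at_closed : closed unit_ball_at.
Proof.
have dotv_cont : continuous (fun x : 'rV[R]_n.+1 => dotv (x - e) (x - e)).
  have -> : (fun x : 'rV[R]_n.+1 => dotv (x - e) (x - e)) =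
      (fun x => \sum_(i < n.+1) ((x 0 i - e 0 i) * (x 0 i - e 0 i))).
    by apply: funext => x; rewrite dotvE; apply: eq_bigr => i _; rewrite !mxE.
  apply: continuous_big => [|i _ x]; first exact: add_continuous.
  have cf : {for x, continuous (fun x : 'rV[R]_n.+1 => x 0 i - e 0 i)}.
    apply: (@continuousB R R^o _ (fun x : 'rV[R]_n.+1 => x 0 i) (fun=> e 0 i)).
      exact: coord_continuous.
    exact: cst_continuous.
  exact: (continuousM cf cf).
apply: (@preimage_closed _ _ _ [set r : R | r <= 1]) => [x _|]; first exact: dotv_cont.
exact: closed_le.
Qed.

Lemma unit_ball_at_compact : compact unit_ball_at.
Proof.
have cube := @rV_compact R n.+1 (fun=> `[(-2 : R), 2]%classic) (fun=> @segment_compact R (-2) 2).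
apply: (subclosed_compact unit_ball_at_closed cube) => x xe i /=.
have := coord_sqr_le_dotv e i; have := coord_sqr_le_dotv (x - e) i.
rewrite e1 !mxE in_itv /= => /(le_trans)/(_ xe) xei ei.
have sqr_le1 (r : R) : r ^+ 2 <= 1 -> - 1 <= r <= 1 by move=> r1; apply/andP; split; nra.
move: (sqr_le1 _ xei) (sqr_le1 _ ei); rewrite -[ord0]/(0 : 'I_1).
by move=> /andP[? ?] /andP[? ?]; apply/andP; split; lra.
Qed.

Lemma unit_ball_at_convex : Defs.convex_set unit_ball_at.
Proof.
move=> x y t; rewrite /unit_ball_at /= => xe ye /andP [t0 t1].
have -> : t *: x + (1 - t) *: y - e = t *: (x - e) + (1 - t) *: (y - e).
  by rewrite !scalerBr addrACA -opprD -scalerDl [t + _]addrC subrK scale1r.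
move: xe ye; set u := x - e; set v := y - e => uu vv.
have := dotv_ge0 (u - v); clearbody u v.
rewrite !(dotvDl, dotvDr, dotvBl, dotvBr, dotvZl, dotvZr, dotvNl, dotvNr) (dotvC v u) opprK => uv.
have h2 : 0 <= t * (1 - t) by apply: mulr_ge0; lra.
have h3 := mulr_ge0 h2 uv.
have h4 : 0 <= t * (1 - dotv u u) by apply: mulr_ge0; lra.
have h5 : 0 <= (1 - t) * (1 - dotv v v) by apply: mulr_ge0; lra.
nra.
Qed.

Lemma unit_ball_at_interior : (unit_ball_at°) e.
Proof.
have n0 : 0 < n.+1%:R :> R by rewrite ltr0n.
apply/nbhs_ballP; exists (1 / n.+1%:R) => /=; first by rewrite divr_gt0.
move=> x; rewrite -ball_normE /= => ex; rewrite /unit_ball_at /= dotvE.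
apply: (@le_trans _ _ (\sum_(i < n.+1) (1 / n.+1%:R) ^+ 2)).
  apply: ler_sum => i _; rewrite !mxE -expr2 -[leLHS]real_normK ?num_real //.
  rewrite lerXn2r ?nnegrE ?divr_ge0 ?ler0n // -normrN opprB.
  by apply/ltW/(le_lt_trans _ ex); have := entry_le_norm (e - x) 0 i; rewrite !mxE.
rewrite sumr_const card_ord -[_ *+ n.+1]mulr_natl.
have -> : n.+1%:R * (1 / n.+1%:R) ^+ 2 = 1 / n.+1%:R :> R by field; rewrite gt_eqF.
by rewrite ler_pdivrMr // mul1r ler1n.
Qed.

Lemma unit_ball_at_convex_body : convex_body unit_ball_at.
Proof.
split; first exact: unit_ball_at_compact.
by split; [exact: unit_ball_at_convex | exists e; exact: unit_ball_at_interior].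
Qed.

Lemma unit_ball_at_not_origin_ball : ~ origin_ball unit_ball_at.
Proof.
(* 2e lies in the ball and has the same norm as -2e, which does not *)
move=> [r [r0 Kr]].
have K2 : unit_ball_at (2 *: e).
  by rewrite /unit_ball_at /= scalerDl scale1r addrK e1.
have : unit_ball_at (- (2 *: e)).
  rewrite Kr /= in K2 *; move: K2; rewrite !enorm_le ?(ltW r0) //.
  by rewrite dotvNl dotvNr opprK.
rewrite /unit_ball_at /= (_ : _ - e = (-3 : R) *: e); last by apply/rowP => i; rewrite !mxE; ring.
by rewrite !(dotvZl, dotvZr) e1; lra.
Qed.

Lemma unit_ball_at_rot_symmetric (H : 'M[R]_n.+1) :
  (e <= H)%MS -> rot_symmetric unit_ball_at H.
Proof.
move=> eH x xH y z yx zx /enorm_eq_dotv yz; rewrite /unit_ball_at /=.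
have xe : (x - e <= H)%MS by rewrite addmx_sub // eqmx_opp.
have pyth u : (u - x <= perp H)%MS ->
    dotv (u - e) (u - e) = dotv (x - e) (x - e) + dotv (u - x) (u - x).
  move=> ux; have -> : u - e = (x - e) + (u - x) by rewrite [RHS]addrC addrA subrK.
  by rewrite dotv_pythagoras // (dotv_perp ux xe).
by rewrite (pyth y) // (pyth z) // yz.
Qed.

End ShiftedBall.

Section Planes.
Context {R : realType} {m : nat}.

Definition unitv (i : nat) : 'rV[R]_m.+3 := delta_mx 0 (inord i).

Lemma inord_eq (i j : nat) : (i < m.+3)%N -> (j < m.+3)%N ->
  (inord i == inord j :> 'I_m.+3) = (i == j).
Proof. by move=> im jm; rewrite -val_eqE /= !inordK. Qed.

Lemma dotv_unitv i : (i < m.+3)%N -> dotv (unitv i) (unitv i) = 1.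
Proof.
move=> im; rewrite /dotv /unitv trmx_delta mul_delta_mx_cond eqxx.
by rewrite mulr1n mxE.
Qed.

Definition plane (j : nat) : 'M[R]_m.+3 := (unitv 0 + (unitv 1 + j%:R *: unitv 2)%R)%MS.

Lemma unitv0_sub_plane j : (unitv 0 <= plane j)%MS.
Proof. exact: addsmxSl. Qed.

Lemma plane_coord j (v : 'rV[R]_m.+3) : (v <= plane j)%MS ->
  v 0 (inord 2) = j%:R * v 0 (inord 1).
Proof.
case/sub_addsmxP => -[u w] /= ->; rewrite [u]mx11_scalar [w]mx11_scalar !mul_scalar_mx.
by rewrite !mxE !inord_eq //= mulr0n mulr1n; ring.
Qed.

Lemma plane_inj i j : (plane i == plane j)%MS -> i = j.
Proof.
move=> /andP [_ /(submx_trans (addsmxSr (unitv 0) _))/plane_coord].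
rewrite !mxE !inord_eq //= mulr0n mulr1n mulr0 mulr1 add0r addr0 mulr1.
by move=> /eqP; rewrite eqr_nat => /eqP.
Qed.

Lemma rank_plane j : \rank (plane j) = 2.
Proof.
have nz (v : 'rV[R]_m.+3) k : v 0 (inord k) = 1 -> v != 0.
  by move=> vk; apply: contra_eq_neq vk => ->; rewrite mxE eq_sym oner_neq0.
rewrite mxrank_disjoint_sum ?rank_rV.
  by rewrite (nz _ 0) ?(nz _ 1) // !mxE !inord_eq //= mulr0n mulr1n mulr0 addr0.
apply/eqP; rewrite -submx0; apply/rV_subP => v; rewrite sub_capmx.
case/andP => /sub_rVP [k ->] /sub_rVP [l kl].
move/rowP/(_ (inord 1)): (kl); rewrite !mxE !inord_eq //= mulr0n mulr1n.
by rewrite !mulr0 addr0 mulr1 => l0; rewrite kl -l0 scale0r sub0mx.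
Qed.

End Planes.

Theorem corollary4p3 (R : realType) :
  (* (a) *)
  (forall (n : nat) (H1 H2 : 'M[R]_n),
     (3 <= n)%N -> \rank H1 = 1%N -> \rank H2 = 1%N -> ~~ (H1 == H2)%MS ->
     [/\ (perp H1 + perp H2 == 1%:M)%MS,
         ~ orth_sub (perp H1) (perp H2),
         (forall E : set 'rV[R]_n,
            E !=set0 -> closed E -> E `<=` @sphere R n ->
            (forall x, E x ->
               @sphere R n `&` [set y | (y - x <= perp H1)%MS] `<=` E /\
               @sphere R n `&` [set y | (y - x <= perp H2)%MS] `<=` E) ->
            E = @sphere R n),
         (forall F : set 'rV[R]_n,
            closed F ->
            (forall Q, rotation_fixing H1 Q -> forall x, F x -> F (x *m Q)) ->
            (forall Q, rotation_fixing H2 Q -> forall x, F x -> F (x *m Q)) ->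
            union_of_origin_spheres F)
       & (forall K : set 'rV[R]_n,
            convex_body K -> rot_symmetric K H1 -> rot_symmetric K H2 ->
            origin_ball K)]) /\
  (* (b) *)
  (forall (n : nat), (4 <= n)%N -> forall k : nat,
     exists Hs : 'I_k -> 'M[R]_n,
       (forall i j, i != j -> ~~ (Hs i == Hs j)%MS) /\
       (forall j, (2 <= \rank (Hs j) <= n - 2)%N) /\
       exists K : set 'rV[R]_n,
         convex_body K /\ (forall j, rot_symmetric K (Hs j)) /\ ~ origin_ball K).
Proof.
split=> [n H1 H2 n3 /unit_line_of_rank1[a a1 H1a] /unit_line_of_rank1[b b1 H2b] H12 |].
  have ab1 := unit_lines_dotv_lt1 a1 b1 H1a H2b H12.
  have spheres X := slice_closed2_spheres (X := X) n3 a1 b1 ab1.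
  split.
  - exact: addsmx_perp_lines a1 b1 H1a H2b ab1.
  - exact: perp_lines_not_orth H1a H2b n3.
  - move=> E E0 _ ES hE; apply: sphere_of_spheres => //; apply: spheres.
    + by apply: (slice_closed_sphere_moves H1a) => // x /hE[].
    + by apply: (slice_closed_sphere_moves H2b) => // x /hE[].
  - move=> F _ hF1 hF2; apply: spheres.
    + exact: (slice_closed_rotation_invariant H1a).
    + exact: (slice_closed_rotation_invariant H2b).
  - move=> K cK sK1 sK2; apply: (origin_ball_of_spheres a1 cK); apply: spheres.
    + exact: (slice_closed_rot_symmetric a1 H1a).
    + exact: (slice_closed_rot_symmetric b1 H2b).
case=> [|[|[|[|m]]]] // _ k.
exists (fun j : 'I_k => plane j); split; [|split].
- by move=> i j; apply: contraNN => /plane_inj/val_inj->.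
- by move=> j; rewrite rank_plane.
exists (unit_ball_at (unitv 0)); split; first exact/unit_ball_at_convex_body/dotv_unitv.
split; last exact/unit_ball_at_not_origin_ball/dotv_unitv.
by move=> j; apply/unit_ball_at_rot_symmetric/unitv0_sub_plane.
Qed.
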